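(* Let $K$ be a local field of characteristic $0$, $D$ a finite-dimensional division $K$-algebra, and $A,H$ finite subgroups of $\mathrm{GL}_n(D)$. Set $C=A\cap H$ and assume $[A:C]>2$ or $[H:C]>2$. Let $\delta:H\to M_n(D)$, $h\mapsto\delta_h$, be such that $\varphi_t:H\to\mathrm{GL}_n(D)$, $h\mapsto h+t\delta_h$ ($t\in K^\times$), is a family of first-order deformations, and assume (i) for $g\in H$: $\delta_g=0$ if and only if $g\in C$; and (ii) $a\,\mathrm{im}(\delta_h)\cap\ker(\delta_{h'})=\{0\}$ for all $a\in A\setminus C$ and $h,h'\in H\setminus C$. Then there exists $N\in\mathbb{R}$ such that for all $t$ with $|t|\ge N$, $\langle A,\varphi_t(H)\rangle\cong A*_C\varphi_t(H)\cong A*_C H$ (the first isomorphism being the canonical map).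
   Context: A first-order deformation of a subgroup $H$ of the unit group of an algebra is a linear map $\varphi$, $h\mapsto h+\delta_h$, where $\delta$ satisfies $\delta_{hk}=\delta_hk+h\delta_k$ and $\delta_h\delta_k=0$ for all $h,k\in H$; such maps are group morphisms. Here $\mathrm{im}(\delta_h)$ and $\ker(\delta_h)$ are the image and kernel of $\delta_h$ acting on $D^n$ (as $D$-subspaces). *)

From HB Require Import structures.
From mathcomp Require Import all_boot all_order all_algebra.
From mathcomp Require Import falgebra.
From mathcomp Require Import boolp classical_sets cardinality reals.
Set Implicit Arguments. Unset Strict Implicit. Unset Printing Implicit Defensive.
Import Order.TTheory GRing.Theory Num.Theory.
Local Open Scope ring_scope.
Local Open Scope classical_set_scope.

Definition abs_value (K : fieldType) (R : realType) (v : K -> R) : Prop :=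
  [/\ forall x, 0 <= v x,
      forall x, v x = 0 <-> x = 0,
      forall x y, v (x * y) = v x * v y
    & forall x y, v (x + y) <= v x + v y].

Definition v_converges (K : fieldType) (R : realType) (v : K -> R)
  (u : nat -> K) (l : K) : Prop :=
  forall e : R, 0 < e -> exists N, forall n, (N <= n)%N -> v (u n - l) < e.

Definition v_cauchy (K : fieldType) (R : realType) (v : K -> R)
  (u : nat -> K) : Prop :=
  forall e : R, 0 < e -> exists N, forall m n, (N <= m)%N -> (N <= n)%N ->
    v (u m - u n) < e.

(* A local field: a field complete with respect to a nontrivial absolute
   value, and locally compact for the induced metric topology (some closed
   ball around 0, hence around every point, is (sequentially) compact). *)
Definition local_field (K : fieldType) (R : realType) (v : K -> R) : Prop :=
  [/\ abs_value v,
      exists x : K, v x <> 0 /\ v x <> 1,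
      forall u : nat -> K, v_cauchy v u -> exists l, v_converges v u l
    & exists r : R, 0 < r /\
        forall u : nat -> K, (forall n, v (u n) <= r) ->
          exists (phi : nat -> nat) (l : K),
            (forall n, (phi n < phi n.+1)%N) /\ v_converges v (u \o phi) l].

Section MxGroups.
Variables (D : nzRingType) (n : nat).
Local Notation M := 'M[D]_n.

Definition mx_inverse (x y : M) : Prop := x *m y = 1%:M /\ y *m x = 1%:M.

Definition mx_subgroup (S : set M) : Prop :=
  [/\ S 1%:M,
      forall x y, S x -> S y -> S (x *m y)
    & forall x, S x -> exists y, S y /\ mx_inverse x y].

Definition finite_mx_subgroup (S : set M) : Prop :=
  mx_subgroup S /\ finite_set S.

Definition mx_gen (S : set M) : set M :=
  [set x | forall G, mx_subgroup G -> S `<=` G -> G x].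

Definition lcoset (C : set M) (a : M) : set M := [set a *m c | c in C].

Definition index_gt2 (A C : set M) : Prop :=
  exists a1 a2 a3, [/\ A a1, A a2 & A a3] /\
    [/\ lcoset C a1 <> lcoset C a2, lcoset C a1 <> lcoset C a3
       & lcoset C a2 <> lcoset C a3].

Definition mx_im (m : M) : set 'cV[D]_n := [set m *m w | w in setT].
Definition mx_ker (m : M) : set 'cV[D]_n := [set w | m *m w = 0].
Definition mx_lmul_set (a : M) (S : set 'cV[D]_n) : set 'cV[D]_n :=
  [set a *m w | w in S].

(* delta : H -> M_n(D) defines a first-order deformation h |-> h + delta_h *)
Definition first_order_deformation (H : set M) (delta : M -> M) : Prop :=
  (forall h k, H h -> H k -> delta (h *m k) = delta h *m k + h *m delta k) /\
  (forall h k, H h -> H k -> delta h *m delta k = 0).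

End MxGroups.

Record grp := Grp {
  gcar :> Type;
  gmul : gcar -> gcar -> gcar;
  gone : gcar;
  ginv : gcar -> gcar;
  gmulA : forall x y z, gmul x (gmul y z) = gmul (gmul x y) z;
  gmul1 : forall x, gmul gone x = x;
  gmulV : forall x, gmul (ginv x) x = gone
}.

Section Amalgam.
Variables (D : nzRingType) (n : nat).
Local Notation M := 'M[D]_n.

Definition hom_on (G : grp) (S : set M) (f : M -> G) : Prop :=
  forall x y, S x -> S y -> f (x *m y) = gmul (f x) (f y).

Definition mx_hom_on (S T : set M) (f : M -> M) : Prop :=
  (forall x, S x -> T (f x)) /\
  (forall x y, S x -> S y -> f (x *m y) = f x *m f y).

(* (P, iA, iB) is an amalgamated free product A *_C B, i.e. a pushout in the
   category of groups of the diagram A <-- C --> B (inclusions): the universal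
   property characterizing A *_C B up to unique isomorphism. *)
Definition is_amalgam (A C B P : set M) (iA iB : M -> M) : Prop :=
  [/\ mx_subgroup P, mx_hom_on A P iA, mx_hom_on B P iB,
      (forall c, C c -> iA c = iB c)
    & forall (G : grp) (fA fB : M -> G),
        hom_on A fA -> hom_on B fB -> (forall c, C c -> fA c = fB c) ->
        (exists F : M -> G, [/\ hom_on P F,
            forall a, A a -> F (iA a) = fA a
          & forall b, B b -> F (iB b) = fB b]) /\
        (forall F1 F2 : M -> G, hom_on P F1 -> hom_on P F2 ->
           (forall a, A a -> F1 (iA a) = F2 (iA a)) ->
           (forall b, B b -> F1 (iB b) = F2 (iB b)) ->
           forall x, P x -> F1 x = F2 x)].

End Amalgam.

Definition mxscale (K : fieldType) (D : falgType K) (n : nat) (t : K)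
  (m : 'M[D]_n) : 'M[D]_n := map_mx (fun x => t *: x) m.

Definition deform (K : fieldType) (D : falgType K) (n : nat) (delta : 'M[D]_n -> 'M[D]_n)
  (t : K) (h : 'M[D]_n) : 'M[D]_n := h + mxscale t (delta h).

From HB Require Import structures.
From mathcomp Require Import all_boot all_order all_algebra.
From mathcomp Require Import falgebra.
From mathcomp Require Import boolp classical_sets cardinality reals ring lra.
Import Order.TTheory GRing.Theory Num.Theory.
Import VectorInternalTheory.
Local Open Scope ring_scope.
Local Open Scope classical_set_scope.
Set Implicit Arguments. Unset Strict Implicit. Unset Printing Implicit Defensive.

(* A ping-pong argument. Measure column vectors of D^n by the l1-norm of
   their coordinates over K. Finitely many matrices are involved, so there are
   constants c bounding the action of A, H and the delta_h, and, by (ii), k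
   with |a delta_h y| <= k |delta_h' a delta_h y|. For |t| large, phi_t(h)
   expands vectors on which delta_h is not too small and sends them close to
   im(delta_h); an element a of A \ C sends vectors close to some im(delta_h)
   to vectors on which no delta_h' is small. Along a reduced word in A and
   phi_t(H) the norm of a suitable vector therefore grows, so no such word is
   trivial: this is the normal form theorem that characterizes A *_C phi_t(H),
   and phi_t is injective on H and fixes C. *)

Section AbsValue.
Variables (R : realType) (K : fieldType) (v : K -> R).
Hypothesis hv : abs_value v.

Lemma absv_ge0 x : 0 <= v x. Proof. by case: hv. Qed.
Lemma absv_eq0 x : v x = 0 <-> x = 0. Proof. by case: hv. Qed.
Lemma absv0 : v 0 = 0. Proof. exact/absv_eq0. Qed.
Lemma absvM x y : v (x * y) = v x * v y. Proof. by case: hv. Qed.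
Lemma absvD x y : v (x + y) <= v x + v y. Proof. by case: hv. Qed.

Lemma absv1 : v 1 = 1.
Proof.
have v1_neq0 : v 1 != 0 by apply/eqP => /absv_eq0 /eqP; rewrite oner_eq0.
by apply: (mulfI v1_neq0); rewrite -absvM !mulr1.
Qed.

Lemma absvN x : v (- x) = v x.
Proof.
have vN1 : v (-1) = 1.
  have /eqP : v (-1) ^+ 2 = 1 by rewrite expr2 -absvM mulrNN mulr1 absv1.
  rewrite sqrf_eq1 => /orP[/eqP // | /eqP vN1].
  by have := absv_ge0 (-1); rewrite vN1 ler0N1.
by rewrite -mulN1r absvM vN1 mul1r.
Qed.

Lemma absv_sum (I : Type) (r : seq I) (P : pred I) (F : I -> K) :
  v (\sum_(i <- r | P i) F i) <= \sum_(i <- r | P i) v (F i).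
Proof.
elim/big_rec2: _ => [|i y1 y2 _ IH]; first by rewrite absv0.
by apply: le_trans (absvD _ _) _; rewrite lerD2l.
Qed.

Definition vnorm N (u : 'rV[K]_N) : R := \sum_j v (u 0 j).
Definition mxnorm M N (B : 'M[K]_(M, N)) : R := \sum_i \sum_j v (B i j).

Lemma vnorm_ge0 N (u : 'rV[K]_N) : 0 <= vnorm u.
Proof. by apply: sumr_ge0 => j _; apply: absv_ge0. Qed.

Lemma vnorm0 N : vnorm (0 : 'rV[K]_N) = 0.
Proof. by rewrite /vnorm big1 // => j _; rewrite mxE absv0. Qed.

Lemma vnorm_eq0 N (u : 'rV[K]_N) : vnorm u = 0 -> u = 0.
Proof.
move=> /eqP; rewrite psumr_eq0 => [/allP u0|j _]; last exact: absv_ge0.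
apply/rowP => j; rewrite mxE; apply/absv_eq0/eqP.
by apply: u0; rewrite mem_index_enum.
Qed.

Lemma vnormD N (u w : 'rV[K]_N) : vnorm (u + w) <= vnorm u + vnorm w.
Proof. by rewrite /vnorm -big_split /=; apply: ler_sum => j _; rewrite mxE absvD. Qed.

Lemma vnormZ N a (u : 'rV[K]_N) : vnorm (a *: u) = v a * vnorm u.
Proof. by rewrite /vnorm mulr_sumr; apply: eq_bigr => j _; rewrite mxE absvM. Qed.

Lemma vnormN N (u : 'rV[K]_N) : vnorm (- u) = vnorm u.
Proof. by apply: eq_bigr => j _; rewrite mxE absvN. Qed.

Lemma vnorm_mulmx M N (u : 'rV[K]_M) (B : 'M[K]_(M, N)) :
  vnorm (u *m B) <= vnorm u * mxnorm B.
Proof.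
apply: (@le_trans _ _ (\sum_j \sum_i v (u 0 i) * v (B i j))).
  apply: ler_sum => j _; rewrite mxE; apply: le_trans (absv_sum _ _ _) _.
  by apply: ler_sum => i _; rewrite absvM.
rewrite exchange_big /= /vnorm mulr_suml; apply: ler_sum => i _.
rewrite -mulr_sumr; apply: ler_wpM2l; first exact: absv_ge0.
rewrite /mxnorm (bigD1 i) //= lerDl; apply: sumr_ge0 => i' _.
by apply: sumr_ge0 => j _; apply: absv_ge0.
Qed.

End AbsValue.

Lemma mulmx_factor_ker (K : fieldType) N (B1 B2 : 'M[K]_N) :
  (forall u : 'rV[K]_N, u *m B1 = 0 -> u *m B2 = 0) ->
  exists L : 'M[K]_N, B2 = B1 *m L.
Proof.
move=> ker12; set Q := cokermx B1^T.
have QB1 : Q^T *m B1 = 0 by rewrite -[B1]trmxK -trmx_mul mulmx_coker trmx0.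
have QB2 : Q^T *m B2 = 0.
  by apply/row_matrixP => i; rewrite row_mul row0 ker12 // -row_mul QB1 row0.
have sub21 : (B2^T <= B1^T)%MS.
  by rewrite submxE; apply/eqP/trmx_inj; rewrite trmx_mul trmxK QB2 trmx0.
exists (B2^T *m pinvmx B1^T)^T.
by apply: trmx_inj; rewrite trmx_mul trmxK mulmxKpV.
Qed.

(* Coordinates of D^n over K, through the linear isomorphism [v2r : D -> K^(dim D)]. *)
Section Coordinates.
Variables (K : fieldType) (D : falgType K) (n : nat).
Local Notation V := 'cV[D]_n.
Local Notation N := (n * dim D)%N.

Definition cv2r (w : V) : 'rV[K]_N := mxvec (\matrix_(i, j) v2r (w i 0) 0 j).
Definition r2cv (u : 'rV[K]_N) : V := \col_i r2v (row i (vec_mx u)).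

Definition cvscale (a : K) (w : V) : V := map_mx (fun x => a *: x) w.

Lemma cv2rK : cancel cv2r r2cv.
Proof.
move=> w; apply/colP => i; rewrite /r2cv /cv2r mxE mxvecK.
have -> : row i (\matrix_(i', j) v2r (w i' 0) 0 j) = v2r (w i 0).
  by apply/rowP => j; rewrite !mxE.
by rewrite v2rK.
Qed.

Lemma r2cvK : cancel r2cv cv2r.
Proof.
move=> u; rewrite /cv2r /r2cv.
have -> : \matrix_(i, j) v2r ((\col_i' r2v (row i' (vec_mx u))) i 0) 0 j = vec_mx u.
  by apply/matrixP => i j; rewrite !mxE r2vK !mxE.
by rewrite vec_mxK.
Qed.

Lemma cv2r_inj : injective cv2r. Proof. exact: can_inj cv2rK. Qed.

Lemma cv2rD w w' : cv2r (w + w') = cv2r w + cv2r w'.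
Proof.
rewrite /cv2r -linearD /=; congr mxvec; apply/matrixP => i j.
by rewrite !mxE linearD /= mxE.
Qed.

Lemma cv2rZ a w : cv2r (cvscale a w) = a *: cv2r w.
Proof.
rewrite /cv2r -linearZ /=; congr mxvec; apply/matrixP => i j.
by rewrite !mxE linearZ /= mxE.
Qed.

Lemma cv2r0 : cv2r 0 = 0.
Proof. by have /eqP := cv2rD 0 0; rewrite addr0 -subr_eq subrr eq_sym => /eqP. Qed.

Lemma cv2rN w : cv2r (- w) = - cv2r w.
Proof. by apply/eqP; rewrite -addr_eq0 -cv2rD addNr cv2r0. Qed.

Lemma cv2r_eq0 w : cv2r w = 0 -> w = 0.
Proof. by move=> w0; apply: cv2r_inj; rewrite w0 cv2r0. Qed.

Lemma mulmx_cvscale (M : 'M[D]_n) a w : M *m cvscale a w = cvscale a (M *m w).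
Proof.
apply/colP => i; rewrite !mxE scaler_sumr; apply: eq_bigr => j _.
by rewrite mxE scalerAr.
Qed.

Lemma mxscale_mulmx (M : 'M[D]_n) a w : mxscale a M *m w = cvscale a (M *m w).
Proof.
apply/colP => i; rewrite !mxE scaler_sumr; apply: eq_bigr => j _.
by rewrite mxE scalerAl.
Qed.

Definition mx_coords_fun (M : 'M[D]_n) (u : 'rV[K]_N) : 'rV[K]_N :=
  cv2r (M *m r2cv u).

Lemma mx_coords_fun_linear M : linear (mx_coords_fun M).
Proof.
move=> a u u'; rewrite /mx_coords_fun.
have -> : r2cv (a *: u + u') = cvscale a (r2cv u) + r2cv u'.
  by apply: cv2r_inj; rewrite r2cvK cv2rD cv2rZ !r2cvK.
by rewrite mulmxDr mulmx_cvscale cv2rD cv2rZ.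
Qed.

HB.instance Definition _ M :=
  GRing.isLinear.Build K _ _ _ (mx_coords_fun M) (mx_coords_fun_linear M).

Definition restr_mx (M : 'M[D]_n) : 'M[K]_N := lin1_mx (mx_coords_fun M).

Lemma cv2r_mulmx M w : cv2r (M *m w) = cv2r w *m restr_mx M.
Proof. by rewrite mul_rV_lin1 /= /mx_coords_fun cv2rK. Qed.

End Coordinates.

Section ColumnNorm.
Variables (R : realType) (K : fieldType) (v : K -> R).
Hypothesis hv : abs_value v.
Variables (D : falgType K) (n : nat).
Local Notation V := 'cV[D]_n.

Definition cvnorm (w : V) : R := vnorm v (cv2r w).

Lemma cvnorm_ge0 w : 0 <= cvnorm w. Proof. exact: vnorm_ge0. Qed.

Lemma cvnorm0 : cvnorm 0 = 0. Proof. by rewrite /cvnorm cv2r0 vnorm0. Qed.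

Lemma cvnorm_gt0 w : w != 0 -> 0 < cvnorm w.
Proof.
move=> w_neq0; rewrite lt_def cvnorm_ge0 andbT.
by apply: contraNneq w_neq0 => /(vnorm_eq0 hv) /cv2r_eq0 ->.
Qed.

Lemma cvnormB w w' : cvnorm (w - w') = cvnorm (w' - w).
Proof. by rewrite /cvnorm -(vnormN hv) -cv2rN opprB. Qed.

Lemma cvnorm_lbB w w' : cvnorm w - cvnorm w' <= cvnorm (w - w').
Proof.
rewrite lerBlDr /cvnorm; apply: le_trans (vnormD hv _ _).
by rewrite -cv2rD subrK.
Qed.

Lemma cvnormZ a w : cvnorm (cvscale a w) = v a * cvnorm w.
Proof. by rewrite /cvnorm cv2rZ vnormZ. Qed.

Lemma cvnorm_mulmx (M : 'M[D]_n) w :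
  cvnorm (M *m w) <= cvnorm w * mxnorm v (restr_mx M).
Proof. by rewrite /cvnorm cv2r_mulmx; apply: vnorm_mulmx. Qed.

Lemma cvnorm_mulmx_ker (M1 M2 : 'M[D]_n) :
  (forall w : V, M1 *m w = 0 -> M2 *m w = 0) ->
  exists C : R, forall w, cvnorm (M2 *m w) <= cvnorm (M1 *m w) * C.
Proof.
move=> ker12.
have [L M21] : exists L, restr_mx M2 = restr_mx M1 *m L.
  apply: mulmx_factor_ker => u u1.
  have /cv2r_eq0/ker12 u2 : cv2r (M1 *m r2cv u) = 0 by rewrite cv2r_mulmx r2cvK.
  by rewrite -(r2cvK u) -cv2r_mulmx u2 cv2r0.
exists (mxnorm v L) => w; rewrite /cvnorm !cv2r_mulmx M21 mulmxA.
exact: vnorm_mulmx.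
Qed.

End ColumnNorm.

Lemma finite_common_bound (T : eqType) (R : realType) (S : set T) (P : T -> R -> Prop) :
  finite_set S -> (forall x c c', P x c -> c <= c' -> P x c') ->
  (forall x, S x -> exists c, P x c) -> exists c, forall x, S x -> P x c.
Proof.
move=> /finite_seqP[s ->] Pmono; elim: s => [|x s IH] exP; first by exists 0.
have [c1 Pc1] := IH (fun y (ys : y \in s) => exP y (@mem_behead _ (x :: s) y ys)).
have [c2 Pc2] := exP x (mem_head x s : x \in x :: s).
exists (Num.max c1 c2) => y; rewrite /= in_cons => /orP[/eqP-> | ys].
  by apply: Pmono Pc2 _; rewrite le_max lexx orbT.
by apply: Pmono (Pc1 y ys) _; rewrite le_max lexx.
Qed.

Section GrpTheory.
Variable G : grp.

Lemma gmul_idem (x : G) : gmul x x = x -> x = gone G.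
Proof. by move=> /(congr1 (gmul (ginv x))); rewrite gmulA gmulV gmul1. Qed.

Lemma gmulVr (x : G) : gmul x (ginv x) = gone G.
Proof. by apply: gmul_idem; rewrite -gmulA (gmulA (ginv x)) gmulV gmul1. Qed.

Lemma gmul1r (x : G) : gmul x (gone G) = x.
Proof. by rewrite -(gmulV x) gmulA gmulVr gmul1. Qed.

Lemma gmulIr (g x y : G) : gmul x g = gmul y g -> x = y.
Proof. by move=> e; rewrite -(gmul1r x) -(gmul1r y) -(gmulVr g) !gmulA e. Qed.

End GrpTheory.

Section MxSubgroup.
Variables (D : nzRingType) (n : nat).
Local Notation M := 'M[D]_n.

Lemma mx_subgroup1 (S : set M) : mx_subgroup S -> S 1%:M.
Proof. by case. Qed.

Lemma mx_subgroupM (S : set M) x y : mx_subgroup S -> S x -> S y -> S (x *m y).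
Proof. by case=> _ SM _; apply: SM. Qed.

Lemma mx_subgroupV (S : set M) x : mx_subgroup S -> S x ->
  exists y, S y /\ mx_inverse x y.
Proof. by case=> _ _ SV; apply: SV. Qed.

Lemma mx_inverse_uniq (x y z : M) : mx_inverse x y -> mx_inverse x z -> y = z.
Proof. by move=> [_ yx] [xz _]; rewrite -[y]mulmx1 -xz mulmxA yx mul1mx. Qed.

Lemma mx_subgroupIV (S T : set M) x : mx_subgroup S -> mx_subgroup T ->
  (S `&` T) x -> exists y, (S `&` T) y /\ mx_inverse x y.
Proof.
move=> gS gT [Sx Tx]; have [y [Sy xy]] := mx_subgroupV gS Sx.
have [z [Tz xz]] := mx_subgroupV gT Tx.
by exists y; rewrite (mx_inverse_uniq xy xz) in Sy *.
Qed.

Lemma hom_on_mx1 (G : grp) (S : set M) (f : M -> G) :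
  mx_subgroup S -> hom_on S f -> f 1%:M = gone G.
Proof. by move=> gS fS; apply: gmul_idem; rewrite -fS ?mulmx1 //; apply: mx_subgroup1. Qed.

End MxSubgroup.

(* Words in two matrix groups: a letter [(true, a)] stands for [a] in [A],
   a letter [(false, b)] for [b] in [B]. *)
Section AmalgamCriterion.
Variables (D : nzRingType) (n : nat).
Local Notation M := 'M[D]_n.
Variables (A B : set M).
Hypotheses (gA : mx_subgroup A) (gB : mx_subgroup B).
Local Notation letter := (bool * M)%type.

Definition valid_letter (l : letter) : Prop := if l.1 then A l.2 else B l.2.

Fixpoint valid_word (w : seq letter) : Prop :=
  if w is l :: w' then valid_letter l /\ valid_word w' else True.

Definition word_val (w : seq letter) : M := foldr (fun l x => l.2 *m x) 1%:M w.

Definition word_set : set M := [set x | exists w, valid_word w /\ word_val w = x].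

Fixpoint reduced (w : seq letter) : Prop :=
  if w is l :: w' then
    [/\ valid_letter l, ~ (A `&` B) l.2, reduced w' &
        if w' is l' :: _ then l.1 <> l'.1 else True]
  else True.

Definition normal_word (w : seq letter) : Prop :=
  reduced w \/ exists c, (A `&` B) c /\ w = [:: (true, c)].

Lemma valid_word_cat w w' : valid_word (w ++ w') <-> valid_word w /\ valid_word w'.
Proof. by elim: w => [|l w IH] /=; [tauto | rewrite IH; tauto]. Qed.

Lemma word_val_cat w w' : word_val (w ++ w') = word_val w *m word_val w'.
Proof. by elim: w => [|l w IH] /=; rewrite ?mul1mx // IH mulmxA. Qed.

Lemma valid_letterM b x y :
  valid_letter (b, x) -> valid_letter (b, y) -> valid_letter (b, x *m y).
Proof. by case: b; apply: mx_subgroupM. Qed.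

Lemma valid_letterI b x : (A `&` B) x -> valid_letter (b, x).
Proof. by case: b => -[]. Qed.

Lemma valid_word_inv w : valid_word w ->
  exists u, valid_word u /\ mx_inverse (word_val w) (word_val u).
Proof.
elim: w => [_|[b x] w IH [xb /IH [u [uv [wu uw]]]]].
  by exists [::]; rewrite /mx_inverse mul1mx.
have [y [yb [xy yx]]] : exists y, valid_letter (b, y) /\ mx_inverse x y.
  by case: b xb => /mx_subgroupV; [apply | apply].
exists (u ++ [:: (b, y)]); rewrite valid_word_cat word_val_cat /= mulmx1.
split; first by [].
split; first by rewrite mulmxA -(mulmxA x) wu mulmx1 xy.
by rewrite mulmxA -(mulmxA _ y) yx mulmx1 uw.
Qed.

Lemma word_set_subgroup : mx_subgroup word_set.
Proof.
split; first by exists [::].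
  move=> _ _ [w [wv <-]] [w' [w'v <-]]; exists (w ++ w').
  by rewrite valid_word_cat word_val_cat.
move=> _ [w [wv <-]]; have [u [uv wu]] := valid_word_inv wv.
by exists (word_val u); split => //; exists u.
Qed.

Lemma letter_word_set l : valid_letter l -> word_set l.2.
Proof. by move=> lv; exists [:: l]; rewrite /= mulmx1. Qed.

Lemma mx_gen_word_set : mx_gen (A `|` B) = word_set.
Proof.
apply/seteqP; split => [x|_ [w [wv <-]] S gS ABS].
  apply; first exact: word_set_subgroup.
  by move=> y [Ay|By]; [apply: (@letter_word_set (true, y)) | apply: (@letter_word_set (false, y))].
elim: w wv => [_|[b x] w IH [xv wv]] /=; first exact: mx_subgroup1.
by apply: (mx_subgroupM gS) (IH wv); apply: ABS; case: b xv; [left | right].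
Qed.

Hypothesis reduced_neq1 : forall w, reduced w -> w <> [::] -> word_val w <> 1%:M.

Section UniversalProperty.
Variables (G : grp) (fA fB : M -> G).
Hypotheses (fAM : hom_on A fA) (fBM : hom_on B fB)
  (fAB : forall c, (A `&` B) c -> fA c = fB c).

Definition letter_img (l : letter) : G := if l.1 then fA l.2 else fB l.2.

Definition word_img (w : seq letter) : G :=
  foldr (fun l g => gmul (letter_img l) g) (gone G) w.

Lemma word_img_cat w w' : word_img (w ++ w') = gmul (word_img w) (word_img w').
Proof. by elim: w => [|l w IH] /=; rewrite ?gmul1 // IH gmulA. Qed.

Lemma letter_imgM b x y : valid_letter (b, x) -> valid_letter (b, y) ->
  letter_img (b, x *m y) = gmul (letter_img (b, x)) (letter_img (b, y)).
Proof. by case: b => /=; [apply: fAM | apply: fBM]. Qed.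

Lemma letter_imgI b c : (A `&` B) c -> letter_img (b, c) = fA c.
Proof. by case: b => //= /fAB. Qed.

Lemma reduced_mulI c b x : (A `&` B) c -> valid_letter (b, x) ->
  ~ (A `&` B) x -> ~ (A `&` B) (c *m x).
Proof.
move=> cC xv xnC cxC; apply: xnC.
have [y [yC [_ yc]]] := mx_subgroupIV gA gB cC.
have -> : x = y *m (c *m x) by rewrite mulmxA yc mul1mx.
by case: yC cxC => Ay By [Acx Bcx]; split; apply: mx_subgroupM.
Qed.

Definition normal_rep (r : seq letter) (x : M) (g : G) : Prop :=
  [/\ normal_word r, word_val r = x & word_img r = g].

Lemma normal_rep_absorb c r : (A `&` B) c -> reduced r ->
  exists r', normal_rep r' (c *m word_val r) (gmul (fA c) (word_img r)).
Proof.
move=> cC; case: r => [_ | [b x] r [xv xnC rr alt]].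
  exists [:: (true, c)]; split; rewrite /= ?mulmx1 ?gmul1r //.
  by right; exists c.
exists ((b, c *m x) :: r); split; rewrite /= ?mulmxA //.
  by left; split => //; [apply: valid_letterM (valid_letterI _ cC) xv | apply: reduced_mulI cC xv xnC].
by rewrite (letter_imgM (valid_letterI _ cC) xv) letter_imgI // gmulA.
Qed.

Lemma normal_rep_prepend b x r : valid_letter (b, x) -> reduced r ->
  (if r is l' :: _ then b <> l'.1 else True) ->
  exists r', normal_rep r' (x *m word_val r) (gmul (letter_img (b, x)) (word_img r)).
Proof.
move=> xv rr alt; have [xC | xnC] := pselect ((A `&` B) x).
  by rewrite letter_imgI //; apply: normal_rep_absorb.
by exists ((b, x) :: r); split => //; left.
Qed.

Lemma normal_rep_cons l r : valid_letter l -> normal_word r ->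
  exists r', normal_rep r' (l.2 *m word_val r) (gmul (letter_img l) (word_img r)).
Proof.
case: l => b x /= xv [rr | [c [cC ->]]]; last first.
  have cv := valid_letterI b cC.
  have := normal_rep_prepend (valid_letterM xv cv) (I : reduced [::]) I.
  by rewrite /= (letter_imgM xv cv) !(letter_imgI _ cC) ?mulmx1 ?gmul1r.
case: r rr => [|[b1 x1] r] rr; first exact: normal_rep_prepend.
have [eb | b1b] := pselect (b = b1); last exact: normal_rep_prepend.
case: rr => x1v _ rr alt; subst b1.
have := normal_rep_prepend (valid_letterM xv x1v) rr alt.
by rewrite /= (letter_imgM xv x1v) mulmxA gmulA.
Qed.

Lemma normal_rep_exists w : valid_word w ->
  exists r, normal_rep r (word_val w) (word_img w).
Proof.
elim: w => [_ | l w IH [lv /IH [r [rn rw ri]]]]; first by exists [::]; split => //; left.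
by rewrite /= -rw -ri; apply: normal_rep_cons.
Qed.

Lemma normal_rep1 r g : normal_rep r 1%:M g -> g = gone G.
Proof.
case=> [[rr | [c [[Ac _] ->]]]] r1 <-.
  by case: r rr r1 => // l r rr r1; case: (reduced_neq1 rr _ r1).
by move: r1; rewrite /= mulmx1 gmul1r => ->; apply: (hom_on_mx1 gA fAM).
Qed.

Lemma word_img_eq w w' : valid_word w -> valid_word w' ->
  word_val w = word_val w' -> word_img w = word_img w'.
Proof.
move=> wv w'v ww'; have [u [uv [w'u _]]] := valid_word_inv w'v.
have img1 z : valid_word (z ++ u) -> word_val (z ++ u) = 1%:M ->
    word_img (z ++ u) = gone G.
  by move=> /normal_rep_exists[r rrep] z1; apply: (@normal_rep1 r); rewrite -z1.
apply: (@gmulIr _ (word_img u)).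
by rewrite -!word_img_cat !img1 ?valid_word_cat ?word_val_cat ?ww' ?w'u.
Qed.

Lemma word_set_hom_exists : exists F : M -> G,
  [/\ hom_on word_set F, forall a, A a -> F a = fA a & forall b, B b -> F b = fB b].
Proof.
have [wd wdP] : {wd : M -> seq letter &
    forall x, word_set x -> valid_word (wd x) /\ word_val (wd x) = x}.
  apply: (@choice _ _ (fun x w => word_set x -> valid_word w /\ word_val w = x)) => x.
  by have [[w wP] | nx] := pselect (word_set x); [exists w | exists [::]].
have Fl (l : letter) : valid_letter l -> word_img (wd l.2) = letter_img l.
  move=> lv; have [wdv wdl] := wdP _ (letter_word_set lv).
  by rewrite (@word_img_eq _ [:: l]) /= ?gmul1r ?wdl ?mulmx1.
exists (fun x => word_img (wd x)); split.
- move=> x y xW yW; rewrite -word_img_cat.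
  have [xv xe] := wdP _ xW; have [yv ye] := wdP _ yW.
  have [xyv xye] := wdP _ (mx_subgroupM word_set_subgroup xW yW).
  by apply: word_img_eq; rewrite ?valid_word_cat ?word_val_cat ?xye ?xe ?ye.
- by move=> a Aa; apply: (Fl (true, a)).
- by move=> b Bb; apply: (Fl (false, b)).
Qed.

End UniversalProperty.

Lemma word_set_hom_uniq (G : grp) (F1 F2 : M -> G) :
  hom_on word_set F1 -> hom_on word_set F2 ->
  (forall a, A a -> F1 a = F2 a) -> (forall b, B b -> F1 b = F2 b) ->
  forall x, word_set x -> F1 x = F2 x.
Proof.
move=> F1M F2M F12A F12B _ [w [wv <-]].
elim: w wv => [_ | l w IH [lv wv]] /=.
  by rewrite (hom_on_mx1 word_set_subgroup F1M) (hom_on_mx1 word_set_subgroup F2M).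
have lW := letter_word_set lv; have wW : word_set (word_val w) by exists w.
rewrite F1M // F2M // IH //; congr gmul.
by case: l lv {lW} => -[] x /=; [apply: F12A | apply: F12B].
Qed.

Theorem is_amalgam_mx_gen (C : set M) : C = A `&` B ->
  is_amalgam A C B (mx_gen (A `|` B)) id id.
Proof.
move=> ->; rewrite mx_gen_word_set; split => //.
- exact: word_set_subgroup.
- by split => // a Aa; apply: (@letter_word_set (true, a)).
- by split => // b Bb; apply: (@letter_word_set (false, b)).
move=> G fA fB fAM fBM fAB; split; first exact: word_set_hom_exists.
exact: word_set_hom_uniq.
Qed.

End AmalgamCriterion.

(* Replacing the factor [B'] by an isomorphic copy [B] fixing [C]. *)
Lemma is_amalgam_transport (D : nzRingType) (n : nat) (A C B B' P : set 'M[D]_n)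
    (f : 'M[D]_n -> 'M[D]_n) :
  mx_subgroup B -> mx_hom_on B B' f ->
  (forall b b', B b -> B b' -> f b = f b' -> b = b') -> B' `<=` f @` B ->
  (forall c, C c -> B c /\ f c = c) ->
  is_amalgam A C B' P id id -> is_amalgam A C B P id f.
Proof.
move=> gB [fBB' fM] f_inj B'f fC [gP' [AP _] [B'P _] _ univ].
have [g gP] : {g : 'M[D]_n -> 'M[D]_n & forall x, B' x -> B (g x) /\ f (g x) = x}.
  apply: (@choice _ _ (fun x y => B' x -> B y /\ f y = x)) => x.
  by have [/B'f[y By <-] | nx] := pselect (B' x); [exists y | exists x].
have gK b : B b -> g (f b) = b.
  by move=> Bb; have [Bg fg] := gP _ (fBB' b Bb); apply: f_inj.
split => //.
- by split => // b /fBB' /B'P.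
- by move=> c /fC[].
move=> G fA fB fAM fBM fAC; pose fB' x := fB (g x).
have fB'M : hom_on B' fB'.
  move=> _ _ /B'f[b Bb <-] /B'f[b' Bb' <-].
  by rewrite /fB' -fM // !gK //; [apply: fBM | apply: mx_subgroupM].
have fAC' c : C c -> fA c = fB' c.
  by move=> Cc; have [Bc fc] := fC c Cc; rewrite /fB' -[in RHS]fc gK // fAC.
have [[F [FM FA FB']] Funiq] := univ G fA fB' fAM fB'M fAC'.
split; first by exists F; split => // b Bb; rewrite FB' ?/fB' ?gK //; apply: fBB'.
move=> F1 F2 F1M F2M F12A F12B; apply: Funiq => // _ /B'f[b Bb <-].
exact: F12B.
Qed.

Lemma mulmx_cV_neq0 (R : nzRingType) n (M : 'M[R]_n) :
  M != 0 -> exists w : 'cV[R]_n, M *m w != 0.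
Proof.
move=> /eqP M_neq0; apply/not_existsP => Mw0; apply: M_neq0.
apply/matrixP => i j; have /negP/negPn/eqP := Mw0 (delta_mx j 0).
by rewrite -colE => /colP/(_ i); rewrite !mxE.
Qed.

Section Constants.
Variables (R : realType) (K : fieldType) (v : K -> R) (D : falgType K) (n : nat).
Variables (A H : set 'M[D]_n) (delta : 'M[D]_n -> 'M[D]_n).
Hypotheses (hv : abs_value v) (finA : finite_set A) (finH : finite_set H).
Local Notation C := (A `&` H).
Local Notation cvn := (@cvnorm R K v D n).
Hypothesis delta_eq0 : forall g, H g -> (delta g = 0 <-> C g).
Hypothesis transversal : forall a h h', (A `\` C) a -> (H `\` C) h -> (H `\` C) h' ->
  mx_lmul_set a (mx_im (delta h)) `&` mx_ker (delta h') = [set 0].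

Lemma exists_op_bound : exists c, 1 <= c /\
  forall M w, (A `|` H `|` delta @` H) M -> cvn (M *m w) <= cvn w * c.
Proof.
have finS : finite_set (A `|` H `|` delta @` H).
  by rewrite !finite_setU; split; [split | apply: finite_image].
have [c cP] := finite_common_bound
  (P := fun M c => forall w, cvn (M *m w) <= cvn w * c) finS
  (fun M c c' Pc cc' w => le_trans (Pc w) (ler_wpM2l (cvnorm_ge0 hv w) cc'))
  (fun M _ => ex_intro _ _ (cvnorm_mulmx hv M)).
exists (Num.max 1 c); split => [|M w SM]; first by rewrite le_max lexx.
by apply: le_trans (cP M SM w) _; rewrite ler_wpM2l ?(cvnorm_ge0 hv) // le_max lexx orbT.
Qed.

Lemma exists_transversal_bound : exists k, forall a h h' y,
  (A `\` C) a -> (H `\` C) h -> (H `\` C) h' ->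
  cvn (a *m (delta h *m y)) <= k * cvn (delta h' *m (a *m (delta h *m y))).
Proof.
have finS : finite_set ((A `\` C) `*` ((H `\` C) `*` (H `\` C))).
  by apply: finite_setX; [|apply: finite_setX]; apply: finite_setD.
pose bound (p : 'M[D]_n * ('M[D]_n * 'M[D]_n)) k := forall y,
  cvn (p.1 *m (delta p.2.1 *m y)) <= k * cvn (delta p.2.2 *m (p.1 *m (delta p.2.1 *m y))).
have [k kP] : exists k, forall p, ((A `\` C) `*` ((H `\` C) `*` (H `\` C))) p -> bound p k.
  apply: (finite_common_bound finS) => [p k k' Pk kk' y | [a [h h']] [/= aAC [hHC h'HC]]].
    exact: le_trans (Pk y) (ler_wpM2r (cvnorm_ge0 hv _) kk').
  have ker (w : 'cV[D]_n) : (delta h' *m a *m delta h) *m w = 0 -> (a *m delta h) *m w = 0.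
    move=> w0; have : (mx_lmul_set a (mx_im (delta h)) `&` mx_ker (delta h'))
                        (a *m delta h *m w).
      by split; [exists (delta h *m w); [exists w | rewrite mulmxA] | rewrite /mx_ker /= !mulmxA].
    by rewrite transversal.
  have [k kP] := cvnorm_mulmx_ker hv ker.
  by exists k => y /=; rewrite mulrC !mulmxA; apply: kP.
by exists k => a h h' y aAC hHC h'HC; apply: (kP (a, (h, h'))).
Qed.

Lemma exists_delta_lower_bound : exists k, forall h, (H `\` C) h ->
  exists2 y, y != 0 & cvn y <= k * cvn (delta h *m y).
Proof.
apply: (finite_common_bound (finite_setD _ finH)) => [h k k' [y y_neq0 yk] kk' | h [Hh hnC]].
  by exists y => //; apply: le_trans yk (ler_wpM2r (cvnorm_ge0 hv _) kk').
have /mulmx_cV_neq0[y dy_neq0] : delta h != 0 by apply/eqP => /(delta_eq0 Hh).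
exists (cvn y / cvn (delta h *m y)), y.
  by apply: contraNneq dy_neq0 => ->; rewrite mulmx0.
by rewrite divfK // gt_eqF // cvnorm_gt0.
Qed.

Lemma exists_pingpong_constants : exists c k, [/\ 1 <= c, 1 <= k,
  forall M w, (A `|` H `|` delta @` H) M -> cvn (M *m w) <= cvn w * c,
  forall a h h' y, (A `\` C) a -> (H `\` C) h -> (H `\` C) h' ->
    cvn (a *m (delta h *m y)) <= k * cvn (delta h' *m (a *m (delta h *m y)))
& forall h, (H `\` C) h -> exists2 y, y != 0 & cvn y <= k * cvn (delta h *m y)].
Proof.
have [c [c_ge1 cP]] := exists_op_bound; have [k1 k1P] := exists_transversal_bound.
have [k2 k2P] := exists_delta_lower_bound; set k := Num.max 1 (Num.max k1 k2).
have [k1k k2k] : k1 <= k /\ k2 <= k by rewrite !le_max !lexx !orbT.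
exists c, k; split; rewrite ?le_max ?lexx //.
- move=> a h h' y aAC hHC h'HC; apply: le_trans (k1P a h h' y aAC hHC h'HC) _.
  by rewrite ler_wpM2r ?(cvnorm_ge0 hv).
- move=> h hHC; have [y y_neq0 yk] := k2P h hHC; exists y => //.
  by apply: le_trans yk _; rewrite ler_wpM2r ?(cvnorm_ge0 hv).
Qed.

End Constants.

Section PingPong.
Variables (R : realType) (K : fieldType) (v : K -> R) (D : falgType K) (n : nat).
Variables (A H : set 'M[D]_n) (delta : 'M[D]_n -> 'M[D]_n).
Hypotheses (hv : abs_value v) (gA : mx_subgroup A) (gH : mx_subgroup H).
Local Notation C := (A `&` H).
Local Notation cvn := (@cvnorm R K v D n).
Hypothesis delta_C : forall c, C c -> delta c = 0.

Variables (c k : R) (t : K).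
Hypotheses (c_ge1 : 1 <= c) (k_ge1 : 1 <= k).
Hypothesis op_bound : forall M w, (A `|` H `|` delta @` H) M -> cvn (M *m w) <= cvn w * c.
Hypothesis transversal_bound : forall a h h' y,
  (A `\` C) a -> (H `\` C) h -> (H `\` C) h' ->
  cvn (a *m (delta h *m y)) <= k * cvn (delta h' *m (a *m (delta h *m y))).
Hypothesis delta_lower_bound : forall h, (H `\` C) h ->
  exists2 y, y != 0 & cvn y <= k * cvn (delta h *m y).

Definition pp_eta : R := (2 * (c * c) * (1 + k * c))^-1.
Definition pp_threshold : R := 2 * k * (c + c / pp_eta + c * c + 1).
Hypothesis t_large : pp_threshold <= v t.

(* [pp_lambda] is the expansion factor of a letter of [phi_t(H)], [pp_mu]
   that of a pair of letters. *)
Definition pp_lambda : R := v t / (2 * k) - c.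
Definition pp_mu : R := pp_lambda / c.
Local Notation eta := pp_eta.
Local Notation lam := pp_lambda.
Local Notation mu := pp_mu.
Local Notation phi := (deform delta t).

Lemma c_gt0 : 0 < c. Proof. exact: lt_le_trans ltr01 c_ge1. Qed.
Lemma k_gt0 : 0 < k. Proof. exact: lt_le_trans ltr01 k_ge1. Qed.

Lemma eta_gt0 : 0 < eta.
Proof. by rewrite invr_gt0 !mulr_gt0 ?c_gt0 // ltr_wpDr ?ltr01 // mulr_ge0 // ltW ?k_gt0 ?c_gt0. Qed.

Lemma eta_eq : eta * (c * c) * (1 + k * c) = 2^-1.
Proof.
have kc_neq0 : 1 + k * c != 0.
  by rewrite gt_eqF // ltr_wpDr ?ltr01 // mulr_ge0 // ltW ?k_gt0 ?c_gt0.
by rewrite /pp_eta; field; rewrite kc_neq0 gt_eqF ?c_gt0.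
Qed.

Lemma lam_ge : c / eta + c * c + 1 <= lam.
Proof.
rewrite /pp_lambda lerBrDl ler_pdivlMr ?mulr_gt0 ?k_gt0 //.
by apply: le_trans t_large; rewrite /pp_threshold; lra.
Qed.

Lemma c_lt_mu : c < mu.
Proof.
have := lam_ge; have : 0 <= c / eta by rewrite divr_ge0 // ltW ?c_gt0 ?eta_gt0.
by rewrite /pp_mu ltr_pdivlMr ?c_gt0 //; lra.
Qed.

Lemma lam_gt0 : 0 < lam.
Proof.
have := lam_ge; have : 0 <= c / eta by rewrite divr_ge0 // ltW ?c_gt0 ?eta_gt0.
have := c_gt0; nra.
Qed.

Lemma cvnorm_mulA a w : A a -> cvn (a *m w) <= cvn w * c.
Proof. by move=> Aa; apply: op_bound; left; left. Qed.

Lemma cvnorm_mulH h w : H h -> cvn (h *m w) <= cvn w * c.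
Proof. by move=> Hh; apply: op_bound; left; right. Qed.

Lemma cvnorm_mul_delta h w : H h -> cvn (delta h *m w) <= cvn w * c.
Proof. by move=> Hh; apply: op_bound; right; exists h. Qed.

Lemma cvnorm_mulAV a x : A a -> cvn x <= c * cvn (a *m x).
Proof.
move=> Aa; have [a' [Aa' [_ a'a]]] := mx_subgroupV gA Aa.
by rewrite -[x in cvn x]mul1mx -a'a -mulmxA mulrC cvnorm_mulA.
Qed.

(* Nonidentity letters of [A] map [XH] into [XA], those of [phi_t(H)] map
   [XA] (and their own seed vectors) into [XH]. *)
Definition delta_large h (x : 'cV[D]_n) := cvn x <= 2 * k * cvn (delta h *m x).
Definition XA (x : 'cV[D]_n) :=
  x != 0 /\ forall h, (H `\` C) h -> delta_large h x.
Definition XH (x : 'cV[D]_n) :=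
  x != 0 /\ exists h y, (H `\` C) h /\ cvn (x - delta h *m y) <= eta * cvn x.

Lemma cvnorm_transversal a h h' x y :
  (A `\` C) a -> (H `\` C) h -> (H `\` C) h' ->
  cvn (a *m x) <= k * cvn (delta h' *m (a *m x))
                  + c * (1 + k * c) * cvn (x - delta h *m y).
Proof.
move=> aAC hHC h'HC; set z := delta h *m y; set E := cvn (x - z).
have E_ge0 : 0 <= E := cvnorm_ge0 hv _.
have F1 : cvn (delta h' *m (a *m z)) - cvn (delta h' *m (a *m x)) <= E * c * c.
  apply: le_trans (cvnorm_lbB hv _ _) _; rewrite -!mulmxBr.
  apply: le_trans (cvnorm_mul_delta _ h'HC.1) _; rewrite ler_pM2r ?c_gt0 //.
  by apply: le_trans (cvnorm_mulA _ aAC.1) _; rewrite ler_pM2r ?c_gt0 // cvnormB.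
have F2 := transversal_bound y aAC hHC h'HC.
have F3 : cvn (a *m x) - cvn (a *m z) <= E * c.
  by apply: le_trans (cvnorm_lbB hv _ _) _; rewrite -mulmxBr; apply: cvnorm_mulA; case: aAC.
have := k_gt0; have := c_gt0; nra.
Qed.

Lemma pingA a x : (A `\` C) a -> XH x -> XA (a *m x) /\ cvn x <= c * cvn (a *m x).
Proof.
move=> aAC [x_neq0 [h [y [hHC near]]]].
have ax_ge := cvnorm_mulAV x aAC.1.
split => //; split => [|h' h'HC].
  apply/eqP => ax0; have := cvnorm_gt0 hv x_neq0.
  by move: ax_ge; rewrite ax0 (cvnorm0 hv) mulr0; lra.
rewrite /delta_large; have est := cvnorm_transversal x y aAC hHC h'HC.
set P := cvn (a *m x) in ax_ge est *; set L := c * (1 + k * c) in est *.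
have L_ge0 : 0 <= L by rewrite mulr_ge0 ?addr_ge0 ?mulr_ge0 // ltW ?c_gt0 ?k_gt0.
have near' : L * cvn (x - delta h *m y) <= L * (eta * (c * P)).
  by rewrite ler_wpM2l // (le_trans near) // ler_wpM2l // ltW ?eta_gt0.
have half : L * (eta * (c * P)) = P / 2 by rewrite -eta_eq /L; ring.
lra.
Qed.

Lemma deform_mulmx h x : phi h *m x = h *m x + cvscale t (delta h *m x).
Proof. by rewrite /deform mulmxDl mxscale_mulmx. Qed.

Lemma pingH h x : (H `\` C) h -> x != 0 -> delta_large h x ->
  XH (phi h *m x) /\ lam * cvn x <= cvn (phi h *m x).
Proof.
move=> hHC x_neq0 large; set y := phi h *m x.
have hx_le : cvn (h *m x) <= cvn x * c by apply: cvnorm_mulH; case: hHC.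
have hx_eq : y - delta h *m cvscale t x = h *m x.
  by rewrite /y deform_mulmx mulmx_cvscale addrK.
have hy : y - cvscale t (delta h *m x) = h *m x by rewrite /y deform_mulmx addrK.
have G1 : v t * cvn (delta h *m x) - cvn y <= cvn x * c.
  have := cvnorm_lbB hv (cvscale t (delta h *m x)) y.
  by rewrite (cvnormZ hv) (cvnormB hv) hy => /le_trans; apply.
have G2 : v t / (2 * k) * cvn x <= v t * cvn (delta h *m x).
  have vt_ge0 : 0 <= v t / (2 * k) by rewrite divr_ge0 ?(absv_ge0 hv) // mulr_ge0 // ltW ?k_gt0.
  apply: le_trans (ler_wpM2l vt_ge0 large) _.
  by rewrite mulrA divfK // mulf_neq0 // gt_eqF ?k_gt0.
have expand : lam * cvn x <= cvn y by rewrite /pp_lambda; lra.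
have y_gt0 : 0 < cvn y.
  by apply: lt_le_trans expand; rewrite mulr_gt0 ?lam_gt0 ?cvnorm_gt0.
split => //; split; first by apply: contraTneq y_gt0 => ->; rewrite (cvnorm0 hv) ltxx.
exists h, (cvscale t x); split => //; rewrite hx_eq.
have c_le : c <= eta * lam.
  rewrite mulrC -ler_pdivrMr ?eta_gt0 //; apply: le_trans lam_ge.
  by rewrite -addrA lerDl addr_ge0 // mulr_ge0 // ltW ?c_gt0.
apply: le_trans hx_le _; rewrite mulrC.
apply: le_trans (ler_wpM2r (cvnorm_ge0 hv _) c_le) _.
by rewrite -mulrA ler_wpM2l // ltW ?eta_gt0.
Qed.

Lemma mu_gt1 : 1 < mu. Proof. exact: le_lt_trans c_ge1 c_lt_mu. Qed.

Lemma mu_le_lam : mu <= lam.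
Proof. by rewrite /pp_mu ler_pdivrMr ?c_gt0 // ler_peMr // ltW ?lam_gt0. Qed.

Lemma mu_mulr_c : mu * c = lam.
Proof. by rewrite /pp_mu divfK // gt_eqF ?c_gt0. Qed.

Definition pp_letter (l : bool * 'M[D]_n) : Prop :=
  if l.1 then (A `\` C) l.2 else exists2 h, (H `\` C) h & l.2 = phi h.

Fixpoint pp_word (w : seq (bool * 'M[D]_n)) : Prop :=
  if w is l :: w' then
    [/\ pp_letter l, pp_word w' & if w' is l' :: _ then l.1 <> l'.1 else True]
  else True.

(* Admissible starting vectors for a word whose last (rightmost) letter is [l]. *)
Definition pp_seed (l : bool * 'M[D]_n) (x : 'cV[D]_n) : Prop :=
  if l.1 then XH x
  else exists2 h, l.2 = phi h & [/\ (H `\` C) h, x != 0 & delta_large h x].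

Definition pp_target (w : seq (bool * 'M[D]_n)) (x y : 'cV[D]_n) : Prop :=
  if w is l :: _ then
    if l.1 then [/\ XA y, cvn x <= c * cvn y & (1 < size w)%N -> mu * cvn x <= c * cvn y]
    else XH y /\ mu * cvn x <= cvn y
  else True.

Lemma pp_orbit l w x : pp_word (l :: w) -> pp_seed (last l w) x ->
  pp_target (l :: w) x (word_val (l :: w) *m x).
Proof.
have x_ge0 : 0 <= cvn x := cvnorm_ge0 hv x.
elim: w l => [|[b' a'] w IH] [b a] /=.
  case: b => /= [[aAC _ _] xH | _ [h /= -> [hHC x_neq0 large]]]; rewrite mulmx1.
    by have [] := pingA aAC xH.
  have [xH expand] := pingH hHC x_neq0 large; split => //.
  by apply: le_trans expand; rewrite ler_wpM2r // mu_le_lam.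
move=> [la ppw alt] seed; have := IH (b', a') ppw seed; rewrite -mulmxA.
case: b b' la alt {IH ppw seed} => [] [] //= la _;
  set y := _ *m x; have y_ge0 : 0 <= cvn y := cvnorm_ge0 hv y.
  move=> [yH expand]; have [ayA y_le] := pingA la yH.
  have := mu_gt1; split => //; nra.
move=> [[y_neq0 yA] x_le _]; have [h hHC /= ->] := la.
have [phiyH expand] := pingH hHC y_neq0 (yA h hHC); split => //.
by apply: le_trans expand; rewrite -mu_mulr_c; have := mu_gt1; nra.
Qed.

Lemma pp_word_last l w : pp_word (l :: w) -> pp_letter (last l w).
Proof. by elim: w l => [|l' w IH] l /= [] // _ /IH. Qed.

Lemma delta_seed h : (H `\` C) h -> exists2 y, y != 0 & delta_large h y.
Proof.
move=> hHC; have [y y_neq0 y_le] := delta_lower_bound hHC; exists y => //.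
apply: le_trans y_le _; rewrite ler_wpM2r ?(cvnorm_ge0 hv) //.
by have := k_gt0; lra.
Qed.

Lemma pp_seed_exists l : pp_letter l -> (exists h0, (H `\` C) h0) ->
  exists x, pp_seed l x.
Proof.
case: l => [[] a] /= la [h0 h0HC].
  have [y y_neq0 large] := delta_seed h0HC.
  have dy_neq0 : delta h0 *m y != 0.
    apply: contraTneq (cvnorm_gt0 hv y_neq0) => dy0.
    by move: large; rewrite /delta_large dy0 (cvnorm0 hv) mulr0 -leNgt.
  exists (delta h0 *m y); split => //; exists h0, y.
  by rewrite subrr (cvnorm0 hv) mulr_ge0 ?(cvnorm_ge0 hv) // ltW ?eta_gt0.
by have [h hHC /= ->] := la; have [y] := delta_seed hHC; exists y, h.
Qed.

Lemma pp_seed_neq0 l x : pp_seed l x -> x != 0.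
Proof. by rewrite /pp_seed; case: l.1 => [[] | [h _ []]]. Qed.

Lemma pp_word_neq1 l w : pp_word (l :: w) -> word_val (l :: w) <> 1%:M.
Proof.
move=> ppw w1; have C1 : C 1%:M := conj (mx_subgroup1 gA) (mx_subgroup1 gH).
have not_single_A : ~ (l.1 /\ w = [::]).
  case: l ppw w1 => [b a] /= [la _ _] + [b_true w0]; rewrite b_true w0 in la *.
  by rewrite /= mulmx1 => a1; case: la => _; rewrite a1.
have [h0 h0HC] : exists h0, (H `\` C) h0.
  case: l w ppw not_single_A {w1} => [[] a] [|[b' a'] w] /= [la ppw' alt] not_single.
  - by case: not_single.
  - by case: b' ppw' alt not_single => // -[[h hHC _] _ _]; exists h.
  - by case: la => h hHC _; exists h.
  - by case: la => h hHC _; exists h.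
have [x seed] := pp_seed_exists (pp_word_last ppw) (ex_intro _ h0 h0HC).
have x_gt0 := cvnorm_gt0 hv (pp_seed_neq0 seed).
have := pp_orbit ppw seed; rewrite w1 mul1mx.
case: l ppw not_single_A {w1 seed} => [[] a] /= _ not_single.
  move=> [_ _]; case: w not_single => [[]//|l' w] _ /(_ isT).
  by have := c_lt_mu; nra.
by move=> [_]; have := mu_gt1; nra.
Qed.

Hypothesis deformation : first_order_deformation H (fun h => mxscale t (delta h)).
Local Notation Ht := (phi @` H).

Lemma deform_C x : C x -> phi x = x.
Proof.
by move=> /delta_C dx0; apply/matrixP => i j; rewrite !mxE dx0 mxE scaler0 addr0.
Qed.

Lemma deform1 : phi 1%:M = 1%:M.
Proof. exact: deform_C (conj (mx_subgroup1 gA) (mx_subgroup1 gH)). Qed.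

Lemma deformM h h' : H h -> H h' -> phi (h *m h') = phi h *m phi h'.
Proof.
case: deformation => dM dd Hh Hh'.
by rewrite /deform dM // mulmxDl !mulmxDr dd // addr0 addrA addrAC.
Qed.

Lemma deform_subgroup : mx_subgroup Ht.
Proof.
split; first by exists 1%:M; [apply: mx_subgroup1 | apply: deform1].
  by move=> _ _ [h Hh <-] [h' Hh' <-]; exists (h *m h'); [apply: mx_subgroupM | apply: deformM].
move=> _ [h Hh <-]; have [h' [Hh' [hh' h'h]]] := mx_subgroupV gH Hh.
by exists (phi h'); split; [exists h' | rewrite /mx_inverse -!deformM // hh' h'h deform1].
Qed.

Lemma deform_eq1 g : H g -> phi g = 1%:M -> g = 1%:M.
Proof.
move=> Hg g1; have [gC | gnC] := pselect (C g); first by rewrite -(deform_C gC).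
have ppw : pp_word [:: (false, phi g)] by split => //; exists g.
by case: (pp_word_neq1 ppw); rewrite /= mulmx1.
Qed.

Lemma deform_inj h h' : H h -> H h' -> phi h = phi h' -> h = h'.
Proof.
move=> Hh Hh' e; have [z [Hz [h'z zh']]] := mx_subgroupV gH Hh'.
have hz1 : h *m z = 1%:M.
  apply: deform_eq1; first exact: mx_subgroupM.
  by rewrite deformM // e -deformM // h'z deform1.
by rewrite -[h]mulmx1 -zh' mulmxA hz1 mul1mx.
Qed.

Lemma setI_deform : A `&` Ht = C.
Proof.
apply/seteqP; split => [x [Ax [h Hh hx]] | x [Ax Hx]]; last by split; last exists x; rewrite ?deform_C.
apply: contrapT => xnC.
have hnC : ~ C h by move=> hC; apply: xnC; rewrite -hx deform_C.
have [x' [Ax' [xx' x'x]]] := mx_subgroupV gA Ax.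
have x'nC : ~ C x'.
  move=> x'C; have [y [yC x'y]] := mx_subgroupIV gA gH x'C.
  by apply: xnC; rewrite -(mx_inverse_uniq x'y (conj x'x xx')).
have ppw : pp_word [:: (true, x'); (false, x)] by split => //; split => //; exists h.
by case: (pp_word_neq1 ppw); rewrite /= mulmx1.
Qed.

Lemma reduced_pp_word w : reduced A Ht w -> pp_word w.
Proof.
elim: w => [|[[] x] w IH] // [xv xnC /IH ppw alt]; rewrite setI_deform in xnC.
  by split.
split => //; case: xv xnC => h Hh; rewrite /= => <- hnC; exists h => //; split => // hC.
by apply: hnC; rewrite deform_C.
Qed.

Lemma is_amalgam_deform : is_amalgam A C Ht (mx_gen (A `|` Ht)) id id.
Proof.
apply: is_amalgam_mx_gen gA deform_subgroup _ _ (esym setI_deform) => w /reduced_pp_word.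
by case: w => // l w ppw _; apply: pp_word_neq1.
Qed.

Lemma is_amalgam_deform_iso : is_amalgam A C H (mx_gen (A `|` Ht)) id phi.
Proof.
apply: is_amalgam_transport gH _ deform_inj _ _ is_amalgam_deform => //.
- by split => [h Hh | h h' Hh Hh']; [exists h | apply: deformM].
- by move=> x xC; split; [case: xC | apply: deform_C].
Qed.
End PingPong.

Theorem theorem4p8 (R : realType) (K : fieldType) (v : K -> R)
  (D : falgType K) (n : nat) (A H : set 'M[D]_n) (delta : 'M[D]_n -> 'M[D]_n) :
  local_field v ->
  [pchar K] =i pred0 ->
  (forall x : D, x != 0 -> x \is a GRing.unit) ->
  finite_mx_subgroup A -> finite_mx_subgroup H ->
  let C := A `&` H in
  (index_gt2 A C \/ index_gt2 H C) ->
  (forall t : K, t != 0 ->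
     first_order_deformation H (fun h => mxscale t (delta h))) ->
  (forall g, H g -> (delta g = 0 <-> C g)) ->
  (forall a h h', (A `\` C) a -> (H `\` C) h -> (H `\` C) h' ->
     mx_lmul_set a (mx_im (delta h)) `&` mx_ker (delta h') = [set 0]) ->
  exists N : R, forall t : K, t != 0 -> N <= v t ->
    let Ht := deform delta t @` H in
    let P := mx_gen (A `|` Ht) in
    is_amalgam A C Ht P id id /\
    is_amalgam A C H P id (deform delta t).
Proof.
move=> [hv _ _ _] _ _ [gA finA] [gH finH] C _ deformation delta_eq0 transversal.
have delta_C x : C x -> delta x = 0 by move=> xC; apply/delta_eq0 => //; case: xC.
have [c [k [c_ge1 k_ge1 opc tk dk]]] :=
  exists_pingpong_constants hv finA finH delta_eq0 transversal.
exists (pp_threshold c k) => t t_neq0 t_large Ht P; split.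
  exact (is_amalgam_deform hv gA gH delta_C c_ge1 k_ge1 opc tk dk t_large (deformation t t_neq0)).
exact (is_amalgam_deform_iso hv gA gH delta_C c_ge1 k_ge1 opc tk dk t_large (deformation t t_neq0)).
Qed.
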